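(* Let $X,Y,Z$ be Banach spaces and $T:X\oplus_\infty Y\to Z$ a Lipschitz map with $T(0)=0$. Then for every $\varepsilon>0$ there exist $u=(x_1,y_1)$, $v=(x_2,y_2)\in X\oplus_\infty Y$ with $u\ne v$ and $\|u-v\|=\|x_1-x_2\|$ such that $\|Tu-Tv\|\ge(\|T\|_L-\varepsilon)\|u-v\|$.
   Context: $X\oplus_\infty Y$ is $X\times Y$ with norm $\|(x,y)\|=\max\{\|x\|,\|y\|\}$. $\|T\|_L=\sup\{\|Tu-Tv\|/\|u-v\|: u\neq v\}$. *)

From Stdlib Require Import Reals.
Open Scope R_scope.

Record Banach := {
  bcar :> Type;
  vzero : bcar;
  vadd : bcar -> bcar -> bcar;
  vopp : bcar -> bcar;
  vscal : R -> bcar -> bcar;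
  vnorm : bcar -> R;
  vadd_assoc : forall x y z, vadd x (vadd y z) = vadd (vadd x y) z;
  vadd_comm : forall x y, vadd x y = vadd y x;
  vadd_0 : forall x, vadd x vzero = x;
  vadd_opp : forall x, vadd x (vopp x) = vzero;
  vscal_1 : forall x, vscal 1 x = x;
  vscal_assoc : forall a b x, vscal a (vscal b x) = vscal (a * b) x;
  vscal_distr_v : forall a x y, vscal a (vadd x y) = vadd (vscal a x) (vscal a y);
  vscal_distr_s : forall a b x, vscal (a + b) x = vadd (vscal a x) (vscal b x);
  vnorm_eq0 : forall x, vnorm x = 0 -> x = vzero;
  vnorm_scal : forall a x, vnorm (vscal a x) = Rabs a * vnorm x;
  vnorm_triangle : forall x y, vnorm (vadd x y) <= vnorm x + vnorm y;
  vcomplete : forall u : nat -> bcar,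
    (forall eps, 0 < eps -> exists N, forall m n, (N <= m)%nat -> (N <= n)%nat ->
        vnorm (vadd (u m) (vopp (u n))) < eps) ->
    exists l, forall eps, 0 < eps -> exists N, forall n, (N <= n)%nat ->
        vnorm (vadd (u n) (vopp l)) < eps
}.

Arguments vzero {_}.
Arguments vadd {_} _ _.
Arguments vopp {_} _.
Arguments vscal {_} _ _.
Arguments vnorm {_} _.

Definition vdist {E : Banach} (x y : E) : R := vnorm (vadd x (vopp y)).

Definition sum_inf_dist {X Y : Banach} (u v : X * Y) : R :=
  Rmax (vdist (fst u) (fst v)) (vdist (snd u) (snd v)).

Definition sum_inf_zero {X Y : Banach} : X * Y := (vzero, vzero).

Definition lipschitz {X Y Z : Banach} (T : X * Y -> Z) : Prop :=
  exists K, forall u v, vdist (T u) (T v) <= K * sum_inf_dist u v.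

Definition lip_norm_is {X Y Z : Banach} (T : X * Y -> Z) (L : R) : Prop :=
  is_lub (fun r => exists u v, u <> v /\ r = vdist (T u) (T v) / sum_inf_dist u v) L.

From Stdlib Require Import Reals.
From Stdlib Require Import Lra Classical.
Open Scope R_scope.

(* Since L is the least upper bound of the difference quotients of
   T, some pair u = (x1,y1), v = (x2,y2) has quotient > L - eps.  If
   ||x1 - x2|| >= ||y1 - y2|| this pair already works.  Otherwise put
   d = ||y1 - y2|| > ||x1 - x2|| and choose a unit vector e of X (X is
   nontrivial).  By the intermediate value theorem there is 0 < t < d with
   ||(x1 - x2) - t e|| = d - t, and the point
     w = (x1 - t e, y1 - (t/d)(y1 - y2))
   lies "between" u and v: ||u - w|| = ||x1 - (x1 - t e)|| = t and
   ||w - v|| = ||(x1 - t e) - x2|| = d - t, both distances being attained in the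
   X-coordinate.  Since ||u - v|| = t + (d - t), the triangle inequality in Z
   forces one of the pairs (u,w), (w,v) to have quotient >= L - eps. *)

Section VectorAlgebra.

Variable E : Banach.
Implicit Types x y z : E.

Lemma vadd_0l x : vadd vzero x = x.
Proof. rewrite vadd_comm; apply vadd_0. Qed.

Lemma vadd_oppl x : vadd (vopp x) x = vzero.
Proof. rewrite vadd_comm; apply vadd_opp. Qed.

Lemma vadd_cancel x y z : vadd x y = vadd x z -> y = z.
Proof.
  intro H.
  rewrite <- (vadd_0l y), <- (vadd_0l z), <- (vadd_oppl x), <- !vadd_assoc, H.
  reflexivity.
Qed.

Lemma vscal_0 x : vscal 0 x = vzero.
Proof.
  apply (vadd_cancel (vscal 0 x)).
  rewrite vadd_0, <- vscal_distr_s, Rplus_0_l; reflexivity.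
Qed.

(* The additive inverse is scaling by -1; this reduces all sign bookkeeping
   to real arithmetic on scalars. *)
Lemma vopp_scal x : vopp x = vscal (-1) x.
Proof.
  apply (vadd_cancel x); rewrite vadd_opp.
  rewrite <- (vscal_1 _ x) at 1; rewrite <- vscal_distr_s.
  replace (1 + -1) with 0 by ring; symmetry; apply vscal_0.
Qed.

Lemma vopp_add x y : vopp (vadd x y) = vadd (vopp x) (vopp y).
Proof. rewrite !vopp_scal, vscal_distr_v; reflexivity. Qed.

Lemma vsub_eq0 x y : vadd x (vopp y) = vzero -> x = y.
Proof.
  intro H; rewrite <- (vadd_0 _ x), <- (vadd_oppl y), vadd_assoc, H, vadd_0l.
  reflexivity.
Qed.

Lemma vnorm_0 : vnorm (@vzero E) = 0.
Proof. rewrite <- (vscal_0 vzero), vnorm_scal, Rabs_R0, Rmult_0_l; reflexivity. Qed.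

Lemma vnorm_opp x : vnorm (vopp x) = vnorm x.
Proof.
  rewrite vopp_scal, vnorm_scal.
  replace (Rabs (-1)) with 1 by (rewrite Rabs_left; lra); ring.
Qed.

Lemma vnorm_ge0 x : 0 <= vnorm x.
Proof.
  pose proof (vnorm_triangle E x (vopp x)) as H.
  rewrite vadd_opp, vnorm_0, vnorm_opp in H; lra.
Qed.

Lemma vnorm_gt0 x : x <> vzero -> 0 < vnorm x.
Proof.
  intro Hx; destruct (vnorm_ge0 x) as [H|H]; [exact H|].
  exfalso; apply Hx, vnorm_eq0; symmetry; exact H.
Qed.

Lemma unit_vector_exists : (exists x : E, x <> vzero) -> exists e : E, vnorm e = 1.
Proof.
  intros [x Hx]; pose proof (vnorm_gt0 x Hx) as Hpos.
  exists (vscal (/ vnorm x) x).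
  rewrite vnorm_scal, Rabs_right; [field; lra|].
  left; apply Rinv_0_lt_compat; exact Hpos.
Qed.

Lemma vdist_self x : vdist x x = 0.
Proof. unfold vdist; rewrite vadd_opp; apply vnorm_0. Qed.

Lemma vdist_triangle x y z : vdist x z <= vdist x y + vdist y z.
Proof.
  unfold vdist.
  replace (vadd x (vopp z)) with (vadd (vadd x (vopp y)) (vadd y (vopp z))).
  - apply vnorm_triangle.
  - rewrite <- vadd_assoc, (vadd_assoc _ (vopp y)), vadd_oppl, vadd_0l.
    reflexivity.
Qed.

Lemma vdist_shift_l x z c : vdist x (vadd x (vscal c z)) = Rabs c * vnorm z.
Proof.
  unfold vdist.
  rewrite vopp_add, vadd_assoc, vadd_opp, vadd_0l, vopp_scal, vscal_assoc,
    vnorm_scal.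
  replace (-1 * c) with (- c) by ring; rewrite Rabs_Ropp; reflexivity.
Qed.

Lemma vdist_shift_r x y z c :
  vdist (vadd x (vscal c z)) y = vnorm (vadd (vadd x (vopp y)) (vscal c z)).
Proof.
  unfold vdist; rewrite <- !vadd_assoc, (vadd_comm _ (vscal c z)); reflexivity.
Qed.

Lemma vadd_scal_self x c : vadd x (vscal c x) = vscal (1 + c) x.
Proof. rewrite vscal_distr_s, vscal_1; reflexivity. Qed.

Lemma vnorm_line_lipschitz (a e : E) s t : vnorm e = 1 ->
  Rabs (vnorm (vadd a (vscal (- t) e)) - vnorm (vadd a (vscal (- s) e)))
    <= Rabs (t - s).
Proof.
  intro He.
  assert (Hstep : forall p q, vnorm (vadd a (vscal (- q) e))
             <= vnorm (vadd a (vscal (- p) e)) + Rabs (p - q)).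
  { intros p q.
    replace (vadd a (vscal (- q) e))
      with (vadd (vadd a (vscal (- p) e)) (vscal (p - q) e)).
    - rewrite <- (Rmult_1_r (Rabs (p - q))), <- He, <- vnorm_scal.
      apply vnorm_triangle.
    - rewrite <- vadd_assoc, <- vscal_distr_s; do 3 f_equal; ring. }
  apply Rabs_le; split.
  - pose proof (Hstep t s); lra.
  - pose proof (Hstep s t) as H; rewrite Rabs_minus_sym in H; lra.
Qed.

Lemma line_meets_complementary_sphere (a e : E) d :
  vnorm e = 1 -> vnorm a < d ->
  exists t, 0 < t < d /\ vnorm (vadd a (vscal (- t) e)) = d - t.
Proof.
  intros He Had.
  set (h := fun t => vnorm (vadd a (vscal (- t) e))).
  set (f := fun t => t + h t - d).
  assert (Hh0 : h 0 = vnorm a).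
  { unfold h; rewrite Ropp_0, vscal_0, vadd_0; reflexivity. }
  assert (Hd : 0 < d) by (pose proof (vnorm_ge0 a); lra).
  assert (Hhd : 0 < h d).
  { apply vnorm_gt0; intro H.
    replace (vscal (- d) e) with (vopp (vscal d e)) in H
      by (rewrite vopp_scal, vscal_assoc; f_equal; ring).
    apply vsub_eq0 in H; rewrite H, vnorm_scal, He, Rabs_right in Had; lra. }
  assert (Hcont : continuity f).
  { intros t0 r Hr; exists (r / 2); split; [lra|].
    intros t [_ Ht]; simpl in *; unfold R_dist, f in *.
    pose proof (vnorm_line_lipschitz a e t0 t He) as Hlip; change (Rabs (h t - h t0) <= Rabs (t - t0)) in Hlip.
    replace (t + h t - d - (t0 + h t0 - d)) with ((t - t0) + (h t - h t0)) by ring.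
    pose proof (Rabs_triang (t - t0) (h t - h t0)); lra. }
  destruct (IVT f 0 d Hcont Hd) as [t [[Ht0 Htd] Hft]];
    [unfold f; rewrite Hh0; lra | unfold f; lra |].
  unfold f in Hft.
  exists t; split; [split|change (h t = d - t); lra].
  - destruct Ht0 as [H|H]; [exact H|]; subst t; rewrite Hh0 in Hft; lra.
  - destruct Htd as [H|H]; [exact H|]; subst t; lra.
Qed.

End VectorAlgebra.
Section SumInf.

Variables X Y : Banach.
Implicit Types u v w : X * Y.

Definition attained_in_X u v : Prop := sum_inf_dist u v = vdist (fst u) (fst v).

Lemma sum_inf_dist_pos u v : u <> v -> 0 < sum_inf_dist u v.
Proof.
  destruct u as [x1 y1], v as [x2 y2]; intro Huv; unfold sum_inf_dist; simpl.
  destruct (classic (x1 = x2)) as [Hx|Hx].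
  - assert (Hy : y1 <> y2) by (intro Hy; apply Huv; subst; reflexivity).
    eapply Rlt_le_trans; [|apply Rmax_r].
    apply vnorm_gt0; intro H; apply Hy, vsub_eq0, H.
  - eapply Rlt_le_trans; [|apply Rmax_l].
    apply vnorm_gt0; intro H; apply Hx, vsub_eq0, H.
Qed.

Lemma split_through_X (e : X) u v : vnorm e = 1 ->
  vdist (fst u) (fst v) < vdist (snd u) (snd v) ->
  exists w, u <> w /\ w <> v /\ attained_in_X u w /\ attained_in_X w v /\
    sum_inf_dist u w + sum_inf_dist w v = sum_inf_dist u v.
Proof.
  destruct u as [x1 y1], v as [x2 y2]; simpl; intros He Hxy.
  set (d := vdist y1 y2); set (b := vadd y1 (vopp y2)).
  destruct (line_meets_complementary_sphere X (vadd x1 (vopp x2)) e d He Hxy)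
    as [t [[Ht0 Htd] Hmeet]].
  assert (Hb : vnorm b = d) by reflexivity.
  set (w := (vadd x1 (vscal (- t) e), vadd y1 (vscal (- (t / d)) b))).
  assert (Hs : 0 < t / d < 1).
  { split; [apply Rdiv_lt_0_compat; lra|].
    apply (Rmult_lt_reg_r d); [lra|]; field_simplify; lra. }
  assert (Hxuw : vdist x1 (fst w) = t).
  { simpl; rewrite vdist_shift_l, He, Rabs_Ropp, Rabs_right; lra. }
  assert (Hyuw : vdist y1 (snd w) = t).
  { simpl; rewrite vdist_shift_l, Rabs_Ropp, Rabs_right; [|lra].
    rewrite Hb; field; lra. }
  assert (Hxwv : vdist (fst w) x2 = d - t) by (simpl; rewrite vdist_shift_r; exact Hmeet).
  assert (Hywv : vdist (snd w) y2 = d - t).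
  { simpl; rewrite vdist_shift_r; fold b.
    rewrite vadd_scal_self, vnorm_scal, Rabs_right; [|lra].
    rewrite Hb; field; lra. }
  assert (Huw : sum_inf_dist (x1, y1) w = t).
  { change (Rmax (vdist x1 (fst w)) (vdist y1 (snd w)) = t).
    rewrite Hxuw, Hyuw; apply Rmax_left; lra. }
  assert (Hwv : sum_inf_dist w (x2, y2) = d - t).
  { change (Rmax (vdist (fst w) x2) (vdist (snd w) y2) = d - t).
    rewrite Hxwv, Hywv; apply Rmax_left; lra. }
  assert (Huv : sum_inf_dist (x1, y1) (x2, y2) = d).
  { change (Rmax (vdist x1 x2) d = d); apply Rmax_right; unfold d; lra. }
  exists w; unfold attained_in_X.
  change (fst (x1, y1)) with x1; change (fst (x2, y2)) with x2.
  rewrite Huw, Hwv, Huv, Hxuw, Hxwv.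
  repeat split; try ring; intro Heq; [rewrite <- Heq in Hxuw | rewrite Heq in Hxwv];
    simpl in *; rewrite vdist_self in *; lra.
Qed.

End SumInf.

Section LipschitzQuotients.

Variables X Y Z : Banach.
Variable T : X * Y -> Z.

Lemma lip_norm_approx (L c : R) : lip_norm_is T L -> c < L ->
  exists u v, u <> v /\ vdist (T u) (T v) > c * sum_inf_dist u v.
Proof.
  intros [_ Hleast] HcL; apply NNPP; intro Hnone.
  enough (L <= c) by lra.
  apply Hleast; intros r [u [v [Huv ->]]].
  apply Rnot_lt_le; intro Hr; apply Hnone; exists u, v; split; [exact Huv|].
  pose proof (sum_inf_dist_pos X Y u v Huv) as Hpos.
  apply (Rmult_lt_compat_r (sum_inf_dist u v)) in Hr; [|exact Hpos].
  unfold Rdiv in Hr; rewrite Rmult_assoc, Rinv_l, Rmult_1_r in Hr; lra.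
Qed.

Lemma quotient_bound_split (c : R) u v w :
  sum_inf_dist u w + sum_inf_dist w v = sum_inf_dist u v ->
  vdist (T u) (T v) > c * sum_inf_dist u v ->
  vdist (T u) (T w) >= c * sum_inf_dist u w \/
  vdist (T w) (T v) >= c * sum_inf_dist w v.
Proof.
  intros Hsplit Huv.
  pose proof (vdist_triangle Z (T u) (T w) (T v)) as Htri.
  destruct (Rge_dec (vdist (T u) (T w)) (c * sum_inf_dist u w)) as [H|H];
    [left; exact H | right; rewrite <- Hsplit in Huv; nra].
Qed.

End LipschitzQuotients.

Theorem lemma4p2 (X Y Z : Banach) (T : X * Y -> Z)
  (hX : exists x : X, x <> vzero)
  (hT : lipschitz T) (hT0 : T sum_inf_zero = vzero)
  (L : R) (hL : lip_norm_is T L) :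
  forall eps, 0 < eps ->
  exists u v : X * Y, u <> v /\
    sum_inf_dist u v = vdist (fst u) (fst v) /\
    vdist (T u) (T v) >= (L - eps) * sum_inf_dist u v.
Proof.
  intros eps Heps.
  destruct (lip_norm_approx X Y Z T L (L - eps) hL) as [u [v [Huv HTuv]]]; [lra|].
  destruct (Rle_lt_dec (vdist (snd u) (snd v)) (vdist (fst u) (fst v))) as [Hx|Hy].
  -
    exists u, v; repeat split; [exact Huv | apply Rmax_left, Hx | lra].
  - destruct (unit_vector_exists X hX) as [e He].
    destruct (split_through_X X Y e u v He Hy)
      as [w [Huw [Hwv [HXuw [HXwv Hsplit]]]]].
    destruct (quotient_bound_split X Y Z T (L - eps) u v w Hsplit HTuv) as [H|H].
    + exists u, w; auto.
    + exists w, v; auto.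
Qed.
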